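(* For $\lambda,\mu,\nu\in k$ let $$\mathscr{E}_{\lambda,\mu,\nu}=\left\{\begin{pmatrix}a&0&0&0\\ b&a&0&0\\ c&0&a&0\\ d&\lambda b+\nu c&\nu b+\mu c&a\end{pmatrix}\;\middle|\;a,b,c,d\in k\right\},$$ a commutative $k$-algebra under the usual matrix multiplication. Then $\mathscr{E}_{\lambda,\mu,\nu}$ is a symmetric Frobenius $k$-algebra if and only if $\lambda\mu-\nu^2\neq0$.
   Context: $k$ is an algebraically closed field of characteristic zero. A finite-dimensional $k$-algebra $E$ (concentrated in degree $0$) is Frobenius if $E\cong E^*=\mathrm{Hom}_k(E,k)$ as left $E$-modules, and symmetric Frobenius if $E\cong E^*$ as $E$-bimodules. *)

From HB Require Import structures.
From mathcomp Require Import all_boot all_order all_algebra.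
Set Implicit Arguments. Unset Strict Implicit. Unset Printing Implicit Defensive.
Import GRing.Theory.
Local Open Scope ring_scope.

Definition Emat (k : fieldType) (l m n a b c d : k) : 'M[k]_4 :=
  \matrix_(i < 4, j < 4)
    match nat_of_ord i, nat_of_ord j with
    | 0%N, 0%N | 1%N, 1%N | 2%N, 2%N | 3%N, 3%N => a
    | 1%N, 0%N => b
    | 2%N, 0%N => c
    | 3%N, 0%N => d
    | 3%N, 1%N => l * b + n * c
    | 3%N, 2%N => n * b + m * c
    | _, _ => 0
    end.

Definition Ealg (k : fieldType) (l m n : k) (M : 'M[k]_4) : Prop :=
  exists a b c d : k, M = Emat l m n a b c d.

Definition lin_on (k : fieldType) (p : nat) (S : 'M[k]_p -> Prop)
  (f : 'M[k]_p -> k) : Prop :=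
  forall (al : k) (x y : 'M[k]_p), S x -> S y -> f (al *: x + y) = al * f x + f y.

(* A finite-dimensional algebra S (a subalgebra of 'M[k]_p) is symmetric
   Frobenius iff S ~= S^* = Hom_k(S,k) as S-bimodules, where the bimodule
   structure on S^* is (a . f . b)(y) = f (b * y * a). *)
Definition symmetric_frobenius (k : fieldType) (p : nat)
  (S : 'M[k]_p -> Prop) : Prop :=
  exists phi : 'M[k]_p -> 'M[k]_p -> k,
    (forall x, S x -> lin_on S (phi x)) /\
    (forall (al : k) x y z, S x -> S y -> S z ->
        phi (al *: x + y) z = al * phi x z + phi y z) /\
    (forall a x b y, S a -> S x -> S b -> S y ->
        phi (a *m x *m b) y = phi x (b *m y *m a)) /\
    (forall x x', S x -> S x' -> (forall y, S y -> phi x y = phi x' y) -> x = x') /\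
    (forall f, lin_on S f -> exists2 x, S x & forall y, S y -> phi x y = f y).

(* E has basis 1, B, C, Z, where Z spans the socle and E is commutative, so it
   is symmetric Frobenius iff some linear form t makes (x, y) |-> t (x y)
   nondegenerate.  For t the Z-coordinate the Gram matrix is the hyperbolic
   plane on (1, Z) plus [[l, n], [n, m]] on (B, C), nondegenerate iff
   l m - n^2 != 0.  If l m - n^2 = 0, pick (p, q) != 0 in the kernel of
   [[l, n], [n, m]]; every x = pB + qC + sZ satisfies y x = a_y x, and for the
   right s also t x = 0, so x lies in the radical of t whatever t is. *)
From HB Require Import structures.
From mathcomp Require Import all_boot all_order all_algebra ring.
Import GRing.Theory.
Local Open Scope ring_scope.

Section LinearForms.

Context {k : fieldType} {p : nat} {S : 'M[k]_p -> Prop}.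

Lemma lin_on0 {f : 'M[k]_p -> k} : S 0 -> lin_on S f -> f 0 = 0.
Proof.
move=> S0 linf; apply: (addrI (f 0)).
by rewrite addr0 -{1}(mul1r (f 0)) -linf // scale1r addr0.
Qed.

Lemma lin_onZ {f : 'M[k]_p -> k} a x : S 0 -> lin_on S f -> S x ->
  f (a *: x) = a * f x.
Proof. by move=> S0 linf Sx; rewrite -[a *: x]addr0 linf // lin_on0 // addr0. Qed.

Lemma symmetric_frobenius_nondegenerate : S 0 -> S 1%:M -> symmetric_frobenius S ->
  exists2 t, lin_on S t &
    forall x, S x -> (forall y, S y -> t (y *m x) = 0) -> x = 0.
Proof.
move=> S0 S1 [phi [linphi [_ [bimod [inj _]]]]].
have phiE w y : S w -> S y -> phi w y = phi 1%:M (y *m w).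
  by move=> Sw Sy; have := bimod w 1%:M 1%:M y; rewrite !mulmx1 mul1mx; apply.
exists (phi 1%:M) => [|x Sx radx]; first exact: linphi.
apply: inj => // y Sy.
by rewrite (phiE x) // (phiE 0) // radx // mulmx0 (lin_on0 S0 (linphi _ S1)).
Qed.

Lemma trace_form_symmetric_frobenius (t : 'M[k]_p -> k) :
    (forall x y, S x -> S y -> S (x *m y)) ->
    (forall x y, S x -> S y -> x *m y = y *m x) ->
    lin_on S t ->
    (forall x x', S x -> S x' ->
       (forall y, S y -> t (x *m y) = t (x' *m y)) -> x = x') ->
    (forall f, lin_on S f -> exists2 x, S x & forall y, S y -> t (x *m y) = f y) ->
  symmetric_frobenius S.
Proof.
move=> SM Scomm lint inj surj; exists (fun x y => t (x *m y)).
split=> [x Sx a y z Sy Sz|]; first by rewrite mulmxDr -scalemxAr lint //; apply: SM.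
split=> [a x y z Sx Sy Sz|]; first by rewrite mulmxDl -scalemxAl lint //; apply: SM.
split=> [a x b y Sa Sx Sb Sy|]; last by [].
rewrite /= -mulmxA (Scomm a x) // -mulmxA (Scomm a (b *m y)) //; exact: SM.
Qed.

End LinearForms.

Section Ealgebra.

Variables (k : fieldType) (l m n : k).
Local Notation E := (Emat l m n).
Local Notation Ealg := (Ealg l m n).

Lemma Ealg_Emat a b c d : Ealg (E a b c d).
Proof. by exists a, b, c, d. Qed.
Local Hint Resolve Ealg_Emat : core.

Lemma Emat0 : E 0 0 0 0 = 0.
Proof.
apply/matrixP => -[[|[|[|[|i]]]] Hi] [[|[|[|[|j]]]] Hj];
  by rewrite !mxE //= ?mulr0 ?addr0.
Qed.

Lemma Emat1 : E 1 0 0 0 = 1%:M.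
Proof.
apply/matrixP => -[[|[|[|[|i]]]] Hi] [[|[|[|[|j]]]] Hj];
  by rewrite !mxE //= ?mulr0 ?addr0.
Qed.

Lemma EmatZD al a b c d a' b' c' d' :
  al *: E a b c d + E a' b' c' d' =
  E (al * a + a') (al * b + b') (al * c + c') (al * d + d').
Proof.
apply/matrixP => -[[|[|[|[|i]]]] Hi] [[|[|[|[|j]]]] Hj]; rewrite !mxE //=; ring.
Qed.

Lemma EmatM a b c d a' b' c' d' :
  E a b c d *m E a' b' c' d' =
  E (a * a') (a * b' + b * a') (a * c' + c * a')
    (a * d' + d * a' + l * b * b' + n * (b * c' + c * b') + m * c * c').
Proof.
apply/matrixP => -[[|[|[|[|i]]]] Hi] [[|[|[|[|j]]]] Hj];
  rewrite !mxE !big_ord_recr big_ord0 /= !mxE //=; ring.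
Qed.

Lemma Emat_inj a b c d a' b' c' d' :
  E a b c d = E a' b' c' d' -> [/\ a = a', b = b', c = c' & d = d'].
Proof.
move/matrixP=> eqE; have := eqE 0 0; have := eqE 1 0; have := eqE 2 0.
by have := eqE 3 0; rewrite !mxE.
Qed.

Lemma Ealg0 : Ealg 0.
Proof. by rewrite -Emat0. Qed.
Local Hint Resolve Ealg0 : core.

Lemma Ealg1 : Ealg 1%:M.
Proof. by rewrite -Emat1. Qed.

Lemma EalgM x y : Ealg x -> Ealg y -> Ealg (x *m y).
Proof. by move=> [a [b [c [d ->]]]] [a' [b' [c' [d' ->]]]]; rewrite EmatM. Qed.

Lemma Ealg_comm x y : Ealg x -> Ealg y -> x *m y = y *m x.
Proof.
move=> [a [b [c [d ->]]]] [a' [b' [c' [d' ->]]]]; rewrite !EmatM.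
by congr E; ring.
Qed.

Lemma lin_on_Emat {f} : lin_on Ealg f -> forall a b c d,
  f (E a b c d) = a * f (E 1 0 0 0) + b * f (E 0 1 0 0)
                + c * f (E 0 0 1 0) + d * f (E 0 0 0 1).
Proof.
move=> linf a b c d.
have -> : E a b c d = a *: E 1 0 0 0 +
    (b *: E 0 1 0 0 + (c *: E 0 0 1 0 + (d *: E 0 0 0 1 + E 0 0 0 0))).
  by rewrite !EmatZD; congr E; ring.
rewrite !linf; rewrite ?EmatZD //.
by rewrite Emat0 (lin_on0 Ealg0 linf) addr0 !addrA.
Qed.

Local Notation D := (l * m - n ^+ 2).

Lemma sym2_kernelP :
  reflect (exists p q, [/\ (p, q) != (0, 0), l * p + n * q = 0 & n * p + m * q = 0])
          (D == 0).
Proof.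
apply: (iffP eqP) => [D0 | [p [q [pq0 kp kq]]]].
  have kn : n * n + m * - l = 0 by rewrite -oppr0 -D0; ring.
  have [[-> ->]|nl_neq0] := eqVneq (n, l) (0, 0).
    by exists 1, 0; rewrite xpair_eqE oner_eq0; split=> //; ring.
  exists n, (- l); split=> //; last by ring.
  by rewrite xpair_eqE oppr_eq0 -xpair_eqE.
apply: contraNeq pq0 => Dn0.
have Dp : D * p = m * (l * p + n * q) - n * (n * p + m * q) by ring.
have Dq : D * q = l * (n * p + m * q) - n * (l * p + n * q) by ring.
rewrite kp kq !mulr0 subrr in Dp Dq.
move/eqP: Dp; move/eqP: Dq; rewrite !mulf_eq0 (negPf Dn0) /= => /eqP-> /eqP->.
by rewrite eqxx.
Qed.

Lemma Emat_mul_radical p q s a b c d :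
  l * p + n * q = 0 -> n * p + m * q = 0 ->
  E a b c d *m E 0 p q s = a *: E 0 p q s.
Proof.
move=> kp kq; rewrite EmatM -[a *: _]addr0 -Emat0 EmatZD; congr E; try ring.
transitivity (a * s + b * (l * p + n * q) + c * (n * p + m * q)); first ring.
by rewrite kp kq; ring.
Qed.

Lemma Ealg_nondegenerate_det t : lin_on Ealg t ->
  (forall x, Ealg x -> (forall y, Ealg y -> t (y *m x) = 0) -> x = 0) -> D != 0.
Proof.
move=> lint nondeg.
have radical0 p q s : l * p + n * q = 0 -> n * p + m * q = 0 ->
    t (E 0 p q s) = 0 -> [/\ p = 0, q = 0 & s = 0].
  move=> kp kq ts0; suff: E 0 p q s = E 0 0 0 0 by case/Emat_inj.
  rewrite Emat0; apply: nondeg => // _ [a [b [c [d ->]]]].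
  by rewrite Emat_mul_radical // (lin_onZ _ _ Ealg0 lint) // ts0 mulr0.
have k0 (r r' : k) : r * 0 + r' * 0 = 0 by rewrite !mulr0 addr0.
have tZ : t (E 0 0 0 1) != 0.
  by apply/eqP => /(radical0 0 0 1 (k0 l n) (k0 n m)) [_ _ /eqP]; rewrite oner_eq0.
apply/negP => /sym2_kernelP [p [q [pq0 kp kq]]].
pose s := - t (E 0 p q 0) / t (E 0 0 0 1).
have ts0 : t (E 0 p q s) = 0.
  have -> : E 0 p q s = s *: E 0 0 0 1 + E 0 p q 0 by rewrite EmatZD; congr E; ring.
  by rewrite lint // mulfVK // addNr.
by case: (radical0 p q s kp kq ts0) => p0 q0 _; rewrite p0 q0 eqxx in pq0.
Qed.

Local Notation socle x := (x (3 : 'I_4) (0 : 'I_4)).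

Lemma socle_Emat a b c d : socle (E a b c d) = d.
Proof. by rewrite mxE. Qed.

Lemma socle_form_inj x x' : D != 0 -> Ealg x -> Ealg x' ->
  (forall y, Ealg y -> socle (x *m y) = socle (x' *m y)) -> x = x'.
Proof.
move=> D0 [a [b [c [d ->]]]] [a' [b' [c' [d' ->]]]] eq_form.
have := eq_form _ (Ealg_Emat 1 0 0 0); have := eq_form _ (Ealg_Emat 0 0 0 1).
have := eq_form _ (Ealg_Emat 0 1 0 0); have := eq_form _ (Ealg_Emat 0 0 1 0).
rewrite !EmatM !socle_Emat !(mulr0, mulr1, addr0, add0r) => eqC eqB eqa eqd.
have kb : l * (b - b') + n * (c - c') = 0.
  by rewrite -(subrr (l * b' + n * c')) -{1}eqB; ring.
have kc : n * (b - b') + m * (c - c') = 0.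
  by rewrite -(subrr (n * b' + m * c')) -{1}eqC; ring.
have /eqP[/subr0_eq eqb /subr0_eq eqc] : (b - b', c - c') == (0, 0).
  by apply: contraNT D0 => neq0; apply/sym2_kernelP; exists (b - b'), (c - c').
by rewrite eqa eqb eqc eqd.
Qed.

Lemma socle_form_surj f : D != 0 -> lin_on Ealg f ->
  exists2 x, Ealg x & forall y, Ealg y -> socle (x *m y) = f y.
Proof.
move=> D0 linf; set fb := f (E 0 1 0 0); set fc := f (E 0 0 1 0).
exists (E (f (E 0 0 0 1)) ((m * fb - n * fc) / D) ((l * fc - n * fb) / D)
          (f (E 1 0 0 0))); first exact: Ealg_Emat.
move=> _ [a [b [c [d ->]]]]; rewrite EmatM socle_Emat (lin_on_Emat linf a b c d) -/fb -/fc.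
by field.
Qed.

Lemma Ealg_symmetric_frobenius : D != 0 -> symmetric_frobenius Ealg.
Proof.
move=> D0; apply: (trace_form_symmetric_frobenius (fun x => socle x)).
- exact: EalgM.
- exact: Ealg_comm.
- by move=> al x y _ _; rewrite !mxE.
- by move=> x x'; apply: socle_form_inj.
- by move=> f; apply: socle_form_surj.
Qed.

End Ealgebra.

Theorem lemma4p2 (k : closedFieldType) (char0 : [pchar k] =i pred0)
    (l m n : k) :
  symmetric_frobenius (Ealg l m n) <-> l * m - n ^+ 2 != 0.
Proof.
(* Neither the characteristic nor algebraic closure of k plays any role. *)
split=> [|/Ealg_symmetric_frobenius //].
case/(symmetric_frobenius_nondegenerate (Ealg0 _ _ _ _) (Ealg1 _ _ _ _)) => t.
exact: Ealg_nondegenerate_det.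
Qed.
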